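(* Let $R$ be a commutative unital ring. Then the following are equivalent: (i) $\operatorname{sr}(R) \le 2$; (ii) for every ideal $I$ of $R$, the natural map $\operatorname{SL}_2(R) \to \operatorname{SL}_2(R/I)$ is surjective; (iii) for every ideal $I$ of $R$ and every $n \ge 2$, the natural map $\operatorname{SL}_n(R) \to \operatorname{SL}_n(R/I)$ is surjective.
   Context: A row $(r_1,\dots,r_n)\in R^n$ is unimodular if $\sum_i R r_i = R$; $\operatorname{Um}_n(R)$ is the set of such rows. A row $(r_1,\dots,r_{n+1})\in\operatorname{Um}_{n+1}(R)$ ($n>0$) is stable if there exist $s_1,\dots,s_n\in R$ with $(r_1+s_1r_{n+1},\dots,r_n+s_nr_{n+1})\in\operatorname{Um}_n(R)$. An integer $n>0$ lies in the stable range of $R$ if every row in $\operatorname{Um}_{n+1}(R)$ is stable; the Bass stable rank $\operatorname{sr}(R)$ is the least integer in the stable range of $R$ (and $\infty$ if there is none). *)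

From HB Require Import structures.
From mathcomp Require Import all_boot all_order all_algebra.
Set Implicit Arguments. Unset Strict Implicit. Unset Printing Implicit Defensive.
Import GRing.Theory.
Local Open Scope ring_scope.

Definition is_ideal (R : comPzRingType) (I : R -> Prop) : Prop :=
  [/\ I 0,
      (forall x y, I x -> I y -> I (x + y)) &
      (forall r x, I x -> I (r * x))].

Definition unimodular (R : comPzRingType) (n : nat) (r : 'I_n -> R) : Prop :=
  exists c : 'I_n -> R, \sum_(i < n) c i * r i = 1.

Definition stable_row (R : comPzRingType) (n : nat) (r : 'I_n.+1 -> R) : Prop :=
  exists s : 'I_n -> R,
    unimodular (fun i : 'I_n => r (widen_ord (leqnSn n) i) + s i * r ord_max).

Definition in_stable_range (R : comPzRingType) (n : nat) : Prop :=
  (0 < n)%N /\ forall r : 'I_n.+1 -> R, unimodular r -> stable_row r.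

(* sr(R) <= m : the least integer in the stable range is at most m,
   i.e. some k with 0 < k <= m lies in the stable range. *)
Definition sr_le (R : comPzRingType) (m : nat) : Prop :=
  exists k : nat, (k <= m)%N /\ in_stable_range R k.

(* The natural map SL_n(R) -> SL_n(R/I) is surjective: every matrix over R
   whose reduction mod I lies in SL_n(R/I) (i.e. det A = 1 mod I; every element
   of SL_n(R/I) has such a lift) is congruent mod I, entrywise, to a matrix
   of determinant 1 over R. *)
Definition SL_surj (R : comPzRingType) (I : R -> Prop) (n : nat) : Prop :=
  forall A : 'M[R]_n, I (\det A - 1) ->
    exists B : 'M[R]_n, \det B = 1 /\ (forall i j, I (B i j - A i j)).

(* All three conditions are equivalent to 2 lying in the stable range, i.e. to
   every unimodular triple (a, b, c) being stable.
   If SL_2 lifts modulo the principal ideal cR, lifting [[a, b], [-y, x]], whose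
   determinant is 1 - zc when xa + yb + zc = 1, gives the stabilising
   coefficients from the first row of the lift.
   Conversely, let det A = 1 mod I.  Its first column v is unimodular mod I via
   the cofactors c.  With t = c_2 v_2 + ... + c_n v_n, the triple
   (v_0, v_1, 1 - c_0 v_0 - c_1 v_1) is unimodular and its last entry is t mod I;
   stabilising it and undoing the corresponding row operations produces S in
   SL_n(R) whose first column is v mod I.  Then S^-1 A is congruent to a block
   matrix [[1, *], [0, D]] with det D = 1 mod I, and induction on n lifts D. *)

From mathcomp Require Import all_boot all_order all_algebra ring.
Set Implicit Arguments. Unset Strict Implicit. Unset Printing Implicit Defensive.
Import GRing.Theory.
Local Open Scope ring_scope.

Lemma ord2P (i : 'I_2) : i = 0 \/ i = 1.
Proof. by case: i => [[|[|//]] ?]; [left | right]; apply: val_inj. Qed.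

Lemma sum_ord2 (V : nmodType) (F : 'I_2 -> V) : \sum_(i < 2) F i = F 0 + F 1.
Proof. by rewrite !big_ord_recl big_ord0 addr0; congr (F _ + F _); apply: val_inj. Qed.

Lemma sum_ord3 (V : nmodType) (F : 'I_3 -> V) : \sum_(i < 3) F i = F 0 + F 1 + F 2.
Proof.
by rewrite !big_ord_recl big_ord0 addr0 addrA; congr (F _ + F _ + F _); apply: val_inj.
Qed.

Lemma col0_row_mx (T : Type) m n1 n2 (A : 'M[T]_(m, n1.+1)) (B : 'M[T]_(m, n2)) :
  col 0 (row_mx A B) = col 0 A.
Proof.
have -> : (0 : 'I_(n1.+1 + n2)) = lshift n2 0 by apply: val_inj.
exact: colKl.
Qed.

Lemma lsubmx_col0 (T : Type) m n (A : 'M[T]_(m, 1 + n)) : lsubmx A = col 0 A.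
Proof.
rewrite -(col_id 0 (lsubmx A)) col_lsubmx.
by have -> : (0 : 'I_(1 + n)) = lshift n 0 by apply: val_inj.
Qed.

Definition mx2 (V : nmodType) (a b c d : V) : 'M[V]_2 :=
  \matrix_(i, j) nth 0 (nth [::] [:: [:: a; b]; [:: c; d]] i) j.

Lemma det_mx2 (R : comPzRingType) (A : 'M[R]_2) :
  \det A = A 0 0 * A 1 1 - A 0 1 * A 1 0.
Proof.
rewrite (expand_det_row _ 0) sum_ord2 /cofactor !det_mx11 !mxE /=.
rewrite expr0 expr1 mul1r mulN1r mulrN.
by congr (_ * A _ _ - _ * A _ _); apply: val_inj.
Qed.

Definition stable_range2 (R : comPzRingType) : Prop :=
  forall a b c x y z : R, x * a + y * b + z * c = 1 ->
  exists s0 s1 u w : R, u * (a + s0 * c) + w * (b + s1 * c) = 1.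

Lemma sr_le2P (R : comPzRingType) : sr_le R 2 <-> stable_range2 R.
Proof.
split=> [[[|[|[|k]]] [//= _ [//= _ stableR]]] a b c x y z abc1 | stableR].
- have [|s [d ds1]] := stableR (fun i : 'I_2 => [:: a; y * b + z * c]`_i).
    by exists (fun i : 'I_2 => [:: x; 1]`_i); rewrite sum_ord2 /= mul1r addrA.
  move: ds1; rewrite big_ord1 /= => ds1.
  by exists (s ord0 * z), 0, (d ord0), (d ord0 * s ord0 * y); rewrite -ds1; ring.
- have [|s [d ds1]] := stableR (fun i : 'I_3 => [:: a; b; c]`_i).
    by exists (fun i : 'I_3 => [:: x; y; z]`_i); rewrite sum_ord3.
  by move: ds1; rewrite sum_ord2 => ds1; exists (s 0), (s 1), (d 0), (d 1).
- exists 2; split=> //; split=> // r [d]; rewrite sum_ord3 => dr1.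
  have [s0 [s1 [u [w uw1]]]] := stableR _ _ _ _ _ _ dr1.
  exists (fun i : 'I_2 => [:: s0; s1]`_i), (fun i : 'I_2 => [:: u; w]`_i).
  rewrite sum_ord2 /= -uw1.
  by congr (_ * (r _ + _ * r _) + _ * (r _ + _ * r _)); apply: val_inj.
Qed.

Lemma principal_is_ideal (R : comPzRingType) (c : R) :
  is_ideal (fun t => exists k, t = k * c).
Proof.
split; first by exists 0; rewrite mul0r.
  by move=> _ _ [k ->] [l ->]; exists (k + l); rewrite mulrDl.
by move=> r _ [k ->]; exists (r * k); rewrite mulrA.
Qed.

Lemma stable_range2_of_SL_surj2 (R : comPzRingType) :
  (forall I : R -> Prop, is_ideal I -> SL_surj I 2) -> stable_range2 R.
Proof.
move=> SL2 a b c x y z abc1.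
have [|B [detB BA]] := SL2 _ (principal_is_ideal c) (mx2 a b (- y) x).
  by exists (- z); rewrite det_mx2 !mxE /= -abc1; ring.
have [t0 Bt0] := BA 0 0; have [t1 Bt1] := BA 0 1.
exists t0, t1, (B 1 1), (- B 1 0); rewrite -detB det_mx2.
move: Bt0 Bt1; rewrite !mxE /= => /eqP; rewrite subr_eq => /eqP ->.
by move/eqP; rewrite subr_eq => /eqP ->; ring.
Qed.

Section Congruence.
Variables (R : comPzRingType) (I : R -> Prop).
Hypothesis idealI : is_ideal I.

Local Notation "x ≡ y" := (I (x - y)) (at level 70, no associativity).

Lemma idealM r x : I x -> I (r * x).
Proof. by case: idealI => _ _; apply. Qed.

Lemma eqmod_refl x : x ≡ x.
Proof. by rewrite subrr; case: idealI. Qed.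

Lemma eqmod_sym x y : x ≡ y -> y ≡ x.
Proof. by move=> xy; rewrite -opprB -mulN1r; apply: idealM. Qed.

Lemma eqmod_trans y x z : x ≡ y -> y ≡ z -> x ≡ z.
Proof.
by case: idealI => _ addI _ xy yz; rewrite -(subrK y x) -addrA; apply: addI.
Qed.

Lemma eqmodD x1 x2 y1 y2 : x1 ≡ x2 -> y1 ≡ y2 -> x1 + y1 ≡ x2 + y2.
Proof. by case: idealI => _ addI _ x12 y12; rewrite opprD addrACA; apply: addI. Qed.

Lemma eqmodMl r x y : x ≡ y -> r * x ≡ r * y.
Proof. by rewrite -mulrBr; apply: idealM. Qed.

Lemma eqmodM x1 x2 y1 y2 : x1 ≡ x2 -> y1 ≡ y2 -> x1 * y1 ≡ x2 * y2.
Proof.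
move=> x12 y12; apply: (eqmod_trans (y := x1 * y2)); first exact: eqmodMl.
by rewrite ![_ * y2]mulrC; apply: eqmodMl.
Qed.

Lemma eqmod_sum (J : finType) (F G : J -> R) :
  (forall j, F j ≡ G j) -> \sum_j F j ≡ \sum_j G j.
Proof.
move=> FG; apply: (big_ind2 (fun x y => x ≡ y)) => // [|*].
  exact: eqmod_refl.
exact: eqmodD.
Qed.

Lemma eqmod_prod (J : finType) (F G : J -> R) :
  (forall j, F j ≡ G j) -> \prod_j F j ≡ \prod_j G j.
Proof.
move=> FG; apply: (big_ind2 (fun x y => x ≡ y)) => // [|*].
  exact: eqmod_refl.
exact: eqmodM.
Qed.

Definition mxeqmod m n (A B : 'M[R]_(m, n)) := forall i j, A i j ≡ B i j.

Lemma mxeqmod_refl m n (A : 'M[R]_(m, n)) : mxeqmod A A.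
Proof. by move=> i j; apply: eqmod_refl. Qed.

Lemma mxeqmod_sym m n (A B : 'M[R]_(m, n)) : mxeqmod A B -> mxeqmod B A.
Proof. by move=> AB i j; apply: eqmod_sym. Qed.

Lemma mxeqmod_trans m n (B A C : 'M[R]_(m, n)) :
  mxeqmod A B -> mxeqmod B C -> mxeqmod A C.
Proof. by move=> AB BC i j; apply: eqmod_trans (AB i j) (BC i j). Qed.

Lemma mxeqmodMl m n p (A : 'M[R]_(m, n)) (B C : 'M[R]_(n, p)) :
  mxeqmod B C -> mxeqmod (A *m B) (A *m C).
Proof. by move=> BC i j; rewrite !mxE; apply: eqmod_sum => k; apply: eqmodMl. Qed.

Lemma mxeqmod_row_mx m n1 n2 (A A' : 'M[R]_(m, n1)) (B B' : 'M[R]_(m, n2)) :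
  mxeqmod A A' -> mxeqmod B B' -> mxeqmod (row_mx A B) (row_mx A' B').
Proof.
by move=> AA' BB' i j; case: (split_ordP j) => k ->; rewrite ?row_mxEl ?row_mxEr.
Qed.

Lemma mxeqmod_col_mx m1 m2 n (A A' : 'M[R]_(m1, n)) (B B' : 'M[R]_(m2, n)) :
  mxeqmod A A' -> mxeqmod B B' -> mxeqmod (col_mx A B) (col_mx A' B').
Proof.
by move=> AA' BB' i j; case: (split_ordP i) => k ->; rewrite ?col_mxEu ?col_mxEd.
Qed.

Lemma mxeqmod_det n (A B : 'M[R]_n) : mxeqmod A B -> \det A ≡ \det B.
Proof.
move=> AB; apply: eqmod_sum => s; apply: eqmodMl.
by apply: eqmod_prod => i; apply: AB.
Qed.

Definition liftable n (A : 'M[R]_n) := exists B, \det B = 1 /\ mxeqmod B A.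

Lemma liftable_eqmod n (A A' : 'M[R]_n) : mxeqmod A A' -> liftable A' -> liftable A.
Proof.
move=> AA' [B [detB BA']]; exists B; split=> //.
exact: mxeqmod_trans BA' (mxeqmod_sym AA').
Qed.

Lemma liftableMl n (T A : 'M[R]_n) : \det T = 1 -> liftable A -> liftable (T *m A).
Proof.
move=> detT [B [detB BA]]; exists (T *m B); split; last exact: mxeqmodMl.
by rewrite det_mulmx detT detB mulr1.
Qed.

Lemma liftable_ublock n (r : 'rV[R]_n) (D : 'M[R]_n) :
  liftable D -> liftable (block_mx 1%:M r 0 D).
Proof.
move=> [B [detB BD]]; exists (block_mx 1%:M r 0 B); split.
  by rewrite det_ublock det1 detB mulr1.
rewrite !block_mxEh; apply: mxeqmod_row_mx; first exact: mxeqmod_refl.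
by apply: mxeqmod_col_mx => //; apply: mxeqmod_refl.
Qed.

Lemma SL_surj1 : SL_surj I 1.
Proof.
move=> A; rewrite det_mx11 => A1; exists 1%:M; split; first exact: det1.
by move=> i j; rewrite !ord1 mxE; apply: eqmod_sym.
Qed.

Section StableRange2.
Hypothesis stableR : stable_range2 R.

Lemma lift_unimodular_col m (c : 'rV[R]_(2 + m)) (v : 'cV[R]_(2 + m)) :
  (c *m v) 0 0 ≡ 1 -> exists2 S : 'M[R]_(2 + m), \det S = 1 & mxeqmod (col 0 S) v.
Proof.
rewrite -[c]hsubmxK -[v]vsubmxK mul_row_col.
move: (lsubmx c) (rsubmx c) (usubmx v) (dsubmx v) => cu cd vu vd.
rewrite [X in X ≡ _]mxE => cv1.
set t := (cd *m vd) 0 0; set z := 1 - (cu *m vu) 0 0.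
have zt : z ≡ t by rewrite /z -addrA -opprD; apply: eqmod_sym.
have [|s0 [s1 [u [w uw1]]]] := @stableR (vu 0 0) (vu 1 0) z (cu 0 0) (cu 0 1) 1.
  by rewrite mul1r /z mxE sum_ord2 addrCA subrr addr0.
pose s : 'cV[R]_2 := \col_i [:: s0; s1]`_i.
pose p := vu + z *: s.
pose M2 := mx2 (p 0 0) (- w) (p 1 0) u.
pose L : 'M[R]_(m, 2) := \matrix_(k, j) (vd k 0 * (j == 0)%:R).
(* E subtracts t *: s from the top of the first column, leaving vu + (z - t) *: s. *)
pose E : 'M[R]_(2 + m) := block_mx 1%:M (- s *m cd) 0 1%:M.
exists (E *m block_mx M2 0 L 1%:M).
  rewrite det_mulmx !det_ublock det_lblock !det1 !mulr1 mul1r.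
  by rewrite det_mx2 !mxE /= -uw1; ring.
have colM2 : col 0 M2 = p.
  by apply/matrixP => i j; rewrite ord1; case: (ord2P i) => ->; rewrite !mxE.
have colL : col 0 L = vd by apply/matrixP => k j; rewrite ord1 !mxE eqxx mulr1.
rewrite colEsub -mulmx_colsub -colEsub block_mxEh (@col0_row_mx _ (2 + m) 1 m).
rewrite col_col_mx colM2 colL.
rewrite mul_block_col !mul1mx mul0mx add0r.
apply: mxeqmod_col_mx; last exact: mxeqmod_refl.
move=> i j; rewrite ord1 -mulmxA mulNmx (mx11_scalar (cd *m vd)) -/t mul_mx_scalar !mxE.
have -> : forall a b : R, a + z * b - t * b - a = b * (z - t) by move=> a b; ring.
exact: idealM.
Qed.

Lemma SL_surjS n : SL_surj I n.+1 -> SL_surj I n.+2.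
Proof.
move=> IH A detA.
have [S detS SA] : exists2 S : 'M[R]_(2 + n), \det S = 1 & mxeqmod (col 0 S) (col 0 A).
  apply: (lift_unimodular_col (c := \row_i cofactor A i 0)).
  rewrite mxE; under eq_bigr do rewrite !mxE mulrC.
  by rewrite -expand_det_col.
pose N : 'M[R]_(1 + n.+1) := \adj S *m A.
have AE : A = S *m N by rewrite mulmxA mul_mx_adj detS mul1mx.
have N_col0 : mxeqmod (lsubmx N) (col_mx (1%:M : 'M_1) 0).
  have -> : col_mx (1%:M : 'M_1) 0 = \adj S *m lsubmx (S : 'M[R]_(_, 1 + n.+1)).
    by rewrite mulmx_lsub mul_adj_mx detS (scalar_mx_block 1 n.+1) block_mxEh row_mxKl.
  by rewrite -mulmx_lsub; apply: mxeqmodMl; rewrite !lsubmx_col0; apply: mxeqmod_sym.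
pose D := dsubmx (rsubmx N).
have NE : mxeqmod N (block_mx 1%:M (usubmx (rsubmx N)) 0 D).
  rewrite -{1}[N]hsubmxK -{1}[rsubmx N]vsubmxK block_mxEh.
  by apply: mxeqmod_row_mx => //; apply: mxeqmod_refl.
have detD : \det D ≡ 1.
  have := mxeqmod_det NE; rewrite det_ublock det1 mul1r => ND.
  apply: eqmod_trans (eqmod_sym ND) _.
  by rewrite {1}AE det_mulmx detS mul1r in detA.
rewrite AE; apply: liftableMl detS _; apply: liftable_eqmod NE _.
by apply: liftable_ublock; apply: IH.
Qed.

Lemma SL_surj_stable_range2 n : (0 < n)%N -> SL_surj I n.
Proof.
by case: n => // n _; elim: n => [|n IHn]; [exact: SL_surj1 | exact: SL_surjS].
Qed.

End StableRange2.
End Congruence.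

Theorem mainTheorem3 (R : comPzRingType) :
  (sr_le R 2 <-> (forall I : R -> Prop, is_ideal I -> SL_surj I 2)) /\
  ((forall I : R -> Prop, is_ideal I -> SL_surj I 2) <->
   (forall I : R -> Prop, is_ideal I -> forall n : nat, (2 <= n)%N -> SL_surj I n)).
Proof.
split; split.
- by move=> /sr_le2P stableR I idealI; apply: SL_surj_stable_range2.
- by move=> /stable_range2_of_SL_surj2 /sr_le2P.
- move=> /stable_range2_of_SL_surj2 stableR I idealI n n_ge2.
  exact: SL_surj_stable_range2 (leq_trans _ n_ge2).
- by move=> SLn I idealI; apply: SLn.
Qed.
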